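(* Let $M_0<M$ be finite numbers, let $Q^0\subseteq\mathbb{R}^{m+1}$ be a rational polyhedron of height $M$ in the $(x,z)$-space ($x\in\mathbb{R}^m$, $z\in\mathbb{R}$), and let $Q_x\subseteq\mathbb{R}^m$ be a rational polytope of dimension at least one whose relative interior contains $\{x : \exists z>M_0 \text{ with } (x,z)\in Q^0\}$. Then $Q^0\subseteq R(Q_x,M,M_0)$.
   Context: For a polyhedron $H\subseteq\mathbb{R}^m\times\mathbb{R}$ and $\bar x\in\mathbb{R}^m$, the height of $\bar x$ with respect to $H$ is $\max\{\bar z:(\bar x,\bar z)\in H\}$ (it is $+\infty$ if unbounded and $-\infty$ if the set is empty); the height of $H$ is the supremum of the heights of all $\bar x\in\mathbb{R}^m$. For a rational polytope $Q_x\subseteq\mathbb{R}^m$ of dimension at least 1 and finite $M_0<M$, $R(Q_x,M,M_0)$ is the set of all $(\bar x,\bar z)\in\mathbb{R}^m\times\mathbb{R}$ with $\bar x$ in the affine hull of $Q_x$ and $\bar z\le M$ if $\bar x\in\mathrm{relint}(Q_x)$, and $\bar z\le M_0-\frac{d(\bar x,Q_x)}{\mathrm{diam}(Q_x)}(M-M_0)$ otherwise, where $d$ is Euclidean distance and $\mathrm{diam}$ the maximum distance between two points of $Q_x$. *)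

From HB Require Import structures.
From mathcomp Require Import all_boot all_order all_algebra.
From mathcomp Require Import all_classical all_reals.
From mathcomp Require Import ereal.
Set Implicit Arguments. Unset Strict Implicit. Unset Printing Implicit Defensive.
Import Order.TTheory GRing.Theory Num.Theory.
Local Open Scope classical_set_scope.
Local Open Scope ring_scope.

Section Defs.
Variable R : realType.

Definition edist (m : nat) (x y : 'rV[R]_m) : R :=
  Num.sqrt (\sum_(j < m) (x 0 j - y 0 j) ^+ 2).

Definition rat_polyhedron_xz (m : nat) (H : set ('rV[R]_m * R)) : Prop :=
  exists (k : nat) (A : 'M[rat]_(k, m)) (b c : 'I_k -> rat),
    H = [set p : 'rV[R]_m * R | forall i : 'I_k,
           \sum_(j < m) (ratr (A i j) : R) * p.1 0 j + ratr (b i) * p.2 <= ratr (c i)].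

Definition rat_polytope (m : nat) (Q : set 'rV[R]_m) : Prop :=
  exists (k : nat) (P : 'I_k -> 'rV[rat]_m),
    Q = [set x | exists l : 'I_k -> R, (forall i, 0 <= l i) /\
           \sum_(i < k) l i = 1 /\ x = \sum_(i < k) l i *: map_mx ratr (P i)].

Definition aff_hull (m : nat) (Q : set 'rV[R]_m) : set 'rV[R]_m :=
  [set x | exists (k : nat) (p : 'I_k -> 'rV[R]_m) (l : 'I_k -> R),
     (forall i, Q (p i)) /\ \sum_(i < k) l i = 1 /\ x = \sum_(i < k) l i *: p i].

(* dimension at least one: the affine hull is not a single point (nor empty),
   i.e. Q contains two affinely independent (= distinct) points *)
Definition dim_ge1 (m : nat) (Q : set 'rV[R]_m) : Prop :=
  exists x y, Q x /\ Q y /\ x <> y.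

Definition relint (m : nat) (Q : set 'rV[R]_m) : set 'rV[R]_m :=
  [set x | Q x /\ exists e : R, 0 < e /\
     forall y, aff_hull Q y -> edist x y < e -> Q y].

Definition dist_set (m : nat) (x : 'rV[R]_m) (Q : set 'rV[R]_m) : R :=
  inf [set edist x y | y in Q].
Definition diam (m : nat) (Q : set 'rV[R]_m) : R :=
  sup [set edist (p.1) (p.2) | p in [set p | Q p.1 /\ Q p.2]].

(* height of xbar w.r.t. H (max = sup, -oo if empty, +oo if unbounded) *)
Definition height_at (m : nat) (H : set ('rV[R]_m * R)) (x : 'rV[R]_m) : \bar R :=
  ereal_sup [set (z%:E) | z in [set z | H (x, z)]].
Definition height (m : nat) (H : set ('rV[R]_m * R)) : \bar R :=
  ereal_sup [set height_at H x | x in [set: 'rV[R]_m]].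

Definition Rset (m : nat) (Qx : set 'rV[R]_m) (M M0 : R) : set ('rV[R]_m * R) :=
  [set p | aff_hull Qx p.1 /\
     (relint Qx p.1 -> p.2 <= M) /\
     (~ relint Qx p.1 -> p.2 <= M0 - dist_set p.1 Qx / diam Qx * (M - M0))].

End Defs.

From HB Require Import structures.
From mathcomp Require Import all_boot all_order all_algebra.
From mathcomp Require Import all_classical all_reals.
From mathcomp Require Import ereal.
From mathcomp Require Import ring lra.
Import Order.TTheory GRing.Theory Num.Theory.
Local Open Scope classical_set_scope.
Local Open Scope ring_scope.

(* Q0 is convex and its points above level M0 project into relint Qx.  So for
   (x, z) in Q0 with z <= M0 and (y, w) in Q0 with w > M0, the point x_t of
   the segment at a level v in (M0, w) lies in Qx, whence
   d(x, Qx) <= |x - x_t| = t |x - y| and (1 - t) |x - y| = |x_t - y| <= diam Qx.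
   Eliminating |x - y| gives d(x, Qx) (w - v) <= diam Qx (v - z), and letting
   v -> M0, w -> M (the height of Q0) gives d(x, Qx) (M - M0) <= diam Qx (M0 - z).
   The same segment exhibits x as an affine combination of x_t and y. *)

Lemma ler_addgt0M_small (R : realFieldType) (a b c K : R) : 0 < c -> 0 <= K ->
  (forall e, 0 < e -> e < c -> a <= b + K * e) -> a <= b.
Proof.
move=> c_gt0 K_ge0 small; apply/ler_addgt0Pr => e e_gt0.
pose e' := Num.min (c / 2) (e / (K + 1)).
have e'_gt0 : 0 < e' by rewrite lt_min !divr_gt0 //; lra.
have e'_lt_c : e' < c by rewrite gt_min; apply/orP; left; lra.
have Ke'_le_e : K * e' <= e.
  have : e' * (K + 1) <= e by rewrite -ler_pdivlMr ?ge_min ?lexx ?orbT //; lra.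
  nra.
by have := small e' e'_gt0 e'_lt_c; lra.
Qed.

Lemma lerp_solve (R : realFieldType) (z z1 w : R) : z <= w -> w < z1 ->
  exists2 t, 0 <= t < 1 & (1 - t) * z + t * z1 = w.
Proof.
move=> zw wz1; have z1z_gt0 : 0 < z1 - z by lra.
exists ((w - z) / (z1 - z)).
  by rewrite divr_ge0 ?(ltW z1z_gt0) ?subr_ge0 //= ltr_pdivrMr // mul1r ltrD2r.
by field; rewrite gt_eqF.
Qed.

Section Euclid.
Context {R : realType} {m : nat}.
Implicit Types (x y a b : 'rV[R]_m) (Q : set 'rV[R]_m).

Lemma edist_ge0 x y : 0 <= edist x y.
Proof. exact: sqrtr_ge0. Qed.

Lemma edist_scale x y a b (c : R) :
  (forall j, x 0 j - y 0 j = c * (a 0 j - b 0 j)) -> edist x y = `|c| * edist a b.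
Proof.
move=> xy; rewrite /edist (eq_bigr (fun j => c ^+ 2 * (a 0 j - b 0 j) ^+ 2)).
  by rewrite -mulr_sumr sqrtrM ?sqr_ge0 // sqrtr_sqr.
by move=> j _; rewrite xy exprMn.
Qed.

Lemma edist_lerpl x y (t : R) : 0 <= t ->
  edist x ((1 - t) *: x + t *: y) = t * edist x y.
Proof.
move=> t_ge0; rewrite (@edist_scale _ _ x y t) ?ger0_norm //.
by move=> j; rewrite !mxE; ring.
Qed.

Lemma edist_lerpr x y (t : R) : t <= 1 ->
  edist y ((1 - t) *: x + t *: y) = (1 - t) * edist x y.
Proof.
move=> t_le1; rewrite (@edist_scale _ _ x y (t - 1)) ?ler0_norm ?opprB ?subr_le0 //.
by move=> j; rewrite !mxE; ring.
Qed.

Lemma dist_set_ge0 x Q : 0 <= dist_set x Q.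
Proof.
rewrite /dist_set; case: (pselect (has_inf [set edist x y | y in Q])) => [[ne _]|].
  by apply: lb_le_inf => // _ [y _ <-]; exact: edist_ge0.
by move/inf_out ->.
Qed.

Lemma dist_set_le x {y Q} : Q y -> dist_set x Q <= edist x y.
Proof.
move=> Qy; apply: ge_inf; last by exists y.
by exists 0 => _ [w _ <-]; exact: edist_ge0.
Qed.

Lemma diam_ge0 Q : 0 <= diam Q.
Proof.
rewrite /diam; set S := [set edist _ _ | _ in _].
case: (pselect (has_sup S)) => [[[s Ss] ubS]|/sup_out -> //].
apply: le_trans (ub_le_sup ubS Ss); case: Ss => p _ <-; exact: edist_ge0.
Qed.

(* An unbounded set has the junk diameter 0. *)
Lemma edist_le_diam Q a b : 0 < diam Q -> Q a -> Q b -> edist a b <= diam Q.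
Proof.
rewrite /diam; set S := [set edist _ _ | _ in _] => diam_gt0 Qa Qb.
case: (pselect (has_sup S)) => [[_ ubS]|/sup_out supS]; last by rewrite supS ltxx in diam_gt0.
by apply: ub_le_sup => //; exists (a, b).
Qed.

Lemma aff_hull_sub Q x : Q x -> aff_hull Q x.
Proof.
move=> Qx; exists 1%N, (fun=> x), (fun=> 1).
by split=> //; rewrite !big_ord1 scale1r.
Qed.

Lemma aff_hull_extrapolate Q x y (t : R) : t != 1 ->
  Q ((1 - t) *: x + t *: y) -> Q y -> aff_hull Q x.
Proof.
move=> t_neq1 Qxt Qy; have t1 : 1 - t != 0 by rewrite subr_eq0 eq_sym.
exists 2%N, (fun i : 'I_2 => if val i == 0%N then (1 - t) *: x + t *: y else y),
  (fun i : 'I_2 => if val i == 0%N then (1 - t)^-1 else - t / (1 - t)).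
split; first by move=> i; case: ifP.
rewrite !big_ord_recr big_ord0 /=; split; first by field.
by apply/rowP => j; rewrite big_ord0 !mxE; field.
Qed.

End Euclid.

Section Height.
Context {R : realType} {m : nat} {Q : set ('rV[R]_m * R)} {M : R}.
Hypothesis height_Q : height Q = M%:E.

Lemma height_ub {x z} : Q (x, z) -> z <= M.
Proof.
move=> Qxz; rewrite -lee_fin -height_Q.
apply: (@le_trans _ _ (height_at Q x)); apply: ereal_sup_ubound.
  by exists z.
by exists x.
Qed.

Lemma height_gt {y} : y < M -> exists x z, Q (x, z) /\ y < z.
Proof.
rewrite -lte_fin -height_Q => /ereal_sup_gt [_ [x _ <-]].
by move/ereal_sup_gt => [_ [z Qxz <-]]; rewrite lte_fin => yz; exists x, z.
Qed.

End Height.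

Lemma rat_polyhedron_xz_convex (R : realType) (m : nat) (Q : set ('rV[R]_m * R))
    x z y w (t : R) : rat_polyhedron_xz Q -> 0 <= t <= 1 ->
  Q (x, z) -> Q (y, w) -> Q ((1 - t) *: x + t *: y, (1 - t) * z + t * w).
Proof.
case=> k [A [b [c ->]]] /andP[t_ge0 t_le1] /= Qxz Qyw i.
move: (Qxz i) (Qyw i) => {Qxz Qyw} /= Qxz Qyw.
under eq_bigr => j _ do rewrite !mxE.
rewrite (eq_bigr (fun j => (1 - t) * ((ratr (A i j) : R) * x 0 j)
                          + t * ((ratr (A i j) : R) * y 0 j))); last by move=> j _; ring.
rewrite big_split /= -!mulr_sumr.
set Sx := \sum_(j < m) _ in Qxz *; set Sy := \sum_(j < m) _ in Qyw *.
nra.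
Qed.

Section AboveM0.
Context {R : realType} {m : nat} {M0 : R}.
Context {Q0 : set ('rV[R]_m * R)} {Qx : set 'rV[R]_m}.
Hypothesis Q0_polyhedron : rat_polyhedron_xz Q0.
Hypothesis Q0_above_relint : [set x | exists z, M0 < z /\ Q0 (x, z)] `<=` relint Qx.

Lemma Q0_relint {x z} : Q0 (x, z) -> M0 < z -> relint Qx x.
Proof. by move=> Qxz z_gt; apply: Q0_above_relint; exists z. Qed.

Lemma Q0_Qx {x z} : Q0 (x, z) -> M0 < z -> Qx x.
Proof. by move=> Qxz /(Q0_relint Qxz) []. Qed.

Lemma lerp_Qx {x z y w} {t : R} : 0 <= t <= 1 -> Q0 (x, z) -> Q0 (y, w) ->
  M0 < (1 - t) * z + t * w -> Qx ((1 - t) *: x + t *: y).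
Proof. by move=> t01 Qxz Qyw; apply: Q0_Qx; exact: rat_polyhedron_xz_convex. Qed.

Lemma Q0_aff_hull {x z y w} : Q0 (x, z) -> Q0 (y, w) -> M0 < w -> aff_hull Qx x.
Proof.
move=> Qxz Qyw w_gt; have [z_gt|z_le] := ltP M0 z.
  by apply: aff_hull_sub; exact: Q0_Qx Qxz z_gt.
have [t /andP[t_ge0 t_lt1] zt] := @lerp_solve _ z w ((M0 + w) / 2) ltac:(lra) ltac:(lra).
apply: (@aff_hull_extrapolate _ _ _ _ y t); first by rewrite lt_eqF.
  by apply: lerp_Qx Qxz Qyw _; [rewrite t_ge0 ltW | rewrite zt; lra].
exact: Q0_Qx Qyw w_gt.
Qed.

Lemma dist_set_segment_le {x z y w} {D v : R} :
  (forall a b, Qx a -> Qx b -> edist a b <= D) ->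
  Q0 (x, z) -> z <= M0 -> Q0 (y, w) -> M0 < v -> v < w ->
  dist_set x Qx * (w - v) <= D * (v - z).
Proof.
move=> diamD Qxz z_le Qyw v_gt v_lt.
have [t /andP[t_ge0 t_lt1] zt] := @lerp_solve _ z w v ltac:(lra) ltac:(lra).
have Qxt : Qx ((1 - t) *: x + t *: y).
  by apply: lerp_Qx Qxz Qyw _; [rewrite t_ge0 ltW | rewrite zt].
have d_le := dist_set_le x Qxt; rewrite edist_lerpl // in d_le.
have D_ge := diamD _ _ (Q0_Qx Qyw (lt_trans v_gt v_lt)) Qxt.
rewrite edist_lerpr ?(ltW t_lt1) // in D_ge.
have d_ge0 := dist_set_ge0 x Qx; set d := dist_set x Qx in d_le d_ge0 *.
set E := edist x y in d_le D_ge.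
have d_mul : d * (1 - t) <= D * t.
  have : d * (1 - t) <= t * E * (1 - t) by apply: ler_wpM2r; lra.
  have : t * ((1 - t) * E) <= t * D by apply: ler_wpM2l.
  nra.
have -> : w - v = (1 - t) * (w - z) by rewrite -zt; ring.
have -> : v - z = t * (w - z) by rewrite -zt; ring.
by rewrite !mulrA ler_wpM2r //; lra.
Qed.

Lemma dist_set_height_le {x z} {M D : R} : M0 < M -> height Q0 = M%:E ->
  (forall a b, Qx a -> Qx b -> edist a b <= D) ->
  Q0 (x, z) -> z <= M0 -> dist_set x Qx * (M - M0) <= D * (M0 - z).
Proof.
move=> M0_lt height_Q0 diamD Qxz z_le.
have d_ge0 := dist_set_ge0 x Qx; set d := dist_set x Qx in d_ge0 *.
have D_ge0 : 0 <= D.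
  have [y [w [Qyw w_gt]]] := height_gt height_Q0 M0_lt.
  by apply: le_trans (diamD _ _ (Q0_Qx Qyw w_gt) (Q0_Qx Qyw w_gt)); exact: edist_ge0.
apply: (@ler_addgt0M_small _ _ _ ((M - M0) / 2) (2 * d + D)); [lra | lra |].
move=> e e_gt0 e_lt.
have [|y [w [Qyw w_gt]]] := height_gt height_Q0 (y := M - e); first lra.
have w_le := height_ub height_Q0 Qyw.
have := dist_set_segment_le diamD Qxz z_le Qyw (v := M0 + e) ltac:(lra) ltac:(lra).
rewrite -/d.
have : d * (M - w) <= d * e by apply: ler_wpM2l => //; lra.
nra.
Qed.

End AboveM0.

Lemma le_sub_scaled_gap (R : realFieldType) (z M0 M d D : R) : 0 <= D -> z <= M0 ->
  (0 < D -> d * (M - M0) <= D * (M0 - z)) -> z <= M0 - d / D * (M - M0).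
Proof.
move=> D_ge0 z_le bound; have [D_gt0|D0] := ltrP 0 D; last first.
  have -> : D = 0 by apply/eqP; rewrite eq_le D0 D_ge0.
  by rewrite invr0 mulr0 mul0r subr0.
suff : d / D * (M - M0) <= M0 - z by lra.
by rewrite mulrAC ler_pdivrMr // [_ * D]mulrC; exact: bound.
Qed.

Theorem lemma2 (R : realType) (m : nat) (M0 M : R)
  (Q0 : set ('rV[R]_m * R)) (Qx : set 'rV[R]_m) :
  M0 < M ->
  rat_polyhedron_xz Q0 ->
  height Q0 = M%:E ->
  rat_polytope Qx ->
  dim_ge1 Qx ->
  [set x | exists z, M0 < z /\ Q0 (x, z)] `<=` relint Qx ->
  Q0 `<=` Rset Qx M M0.
Proof.
move=> M0_lt Q0_poly height_Q0 _ _ above_relint [x z] Qxz.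
have [y [w [Qyw w_gt]]] := height_gt height_Q0 M0_lt.
split; [|split] => /=.
- exact: (Q0_aff_hull Q0_poly above_relint Qxz Qyw w_gt).
- by move=> _; apply: (height_ub height_Q0 Qxz).
move=> x_out; have z_le : z <= M0.
  by rewrite leNgt; apply/negP => z_gt; apply/x_out/(Q0_relint above_relint Qxz).
apply: (@le_sub_scaled_gap R _ _ _ _ _ (diam_ge0 Qx) z_le) => diam_gt0.
apply: (dist_set_height_le Q0_poly above_relint M0_lt height_Q0 _ Qxz z_le).
by move=> a b; exact: edist_le_diam.
Qed.
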